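(* Let $\mathbb K$ be a field of characteristic $2$ and $D\in\mathbb K[X]$. There exist $p,q\in\mathbb K[X]$ with $q\ne0$ and $\eta\in\mathbb K^*$ such that $p^2-Dq^2=\eta$ if and only if there exist $E\in\mathbb K[X]$ and $r\in\mathbb K$ with $D=E^2+r$. Moreover, one can take $r=0$ (i.e. $D$ is a square in $\mathbb K[X]$) if and only if there is such a solution with $\eta$ a square in $\mathbb K$. *)

From HB Require Import structures.
From mathcomp Require Export all_boot all_order all_algebra.
Set Implicit Arguments. Unset Strict Implicit. Unset Printing Implicit Defensive.

(* In characteristic 2, squaring is additive, so dividing p by q,
   p = s q + t with deg t < deg q, turns p^2 - D q^2 = eta into
   (D - s^2) q^2 = t^2 + eta.  The right-hand side has degree below
   deg q^2 as soon as q is not constant, hence D = s^2.  If q = c is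
   constant, then D = (p/c)^2 + eta/c^2 directly, and this constant is a
   square whenever eta is; conversely D = E^2 + r has the solution
   (E, 1, r) for r <> 0 and (E + 1, 1, 1) for r = 0. *)

From mathcomp Require Import all_boot all_order all_algebra.
From mathcomp Require Import zify.

Set Implicit Arguments.
Unset Strict Implicit.
Unset Printing Implicit Defensive.
Import GRing.Theory.
Local Open Scope ring_scope.

Lemma sqrrD_pchar2 (R : comNzRingType) : 2%N \in [pchar R] ->
  forall x y : R, (x + y) ^+ 2 = x ^+ 2 + y ^+ 2.
Proof. by move=> R2 x y; rewrite sqrrD mulr2n (addrr_pchar2 R2) addr0. Qed.

Lemma size_sqr (R : idomainType) (p : {poly R}) :
  size (p ^+ 2) = (size p).*2.-1.
Proof.
have [-> | p0] := eqVneq p 0; first by rewrite expr0n size_poly0.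
by rewrite size_mul // addnn.
Qed.

Lemma size_sqr_addC_lt (R : idomainType) (t q : {poly R}) (c : R) :
  (1 < size q)%N -> (size t < size q)%N ->
  (size (t ^+ 2 + c%:P)%R < size (q ^+ 2)%R)%N.
Proof.
move=> q_gt1 tq; apply: leq_ltn_trans (size_polyD _ _) _.
have := size_polyC_leq1 c; rewrite !size_sqr; lia.
Qed.

Lemma pell_polyC_den (K : fieldType) (D p : {poly K}) (c eta : K) :
  c != 0 -> p ^+ 2 - D * c%:P ^+ 2 = eta%:P ->
  D = (c^-1 *: p) ^+ 2 - (eta / c ^+ 2)%:P.
Proof.
move=> c0 h; have c2 : c ^+ 2 != 0 by rewrite expf_neq0.
apply: (@mulIf _ (c ^+ 2)%:P); first by rewrite polyC_eq0.
rewrite mulrBl -polyCM divfK // -h exprZn -mul_polyC mulrAC -polyCM -exprMn.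
by rewrite mulVf // expr1n mul1r polyC_exp opprB addrC subrK.
Qed.

Section Char2Pell.

Variable K : fieldType.
Hypothesis K2 : 2%N \in [pchar K].

Let poly2 : 2%N \in [pchar {poly K}]. Proof. by rewrite pchar_poly. Qed.

Lemma pell_sqr_divp (D p q : {poly K}) (eta : K) :
  (1 < size q)%N -> p ^+ 2 - D * q ^+ 2 = eta%:P -> D = (p %/ q) ^+ 2.
Proof.
move=> q_gt1 h; have q0 : q != 0 by rewrite -size_poly_gt0 ltnW.
set s := p %/ q; set t := p %% q.
have e : (D - s ^+ 2) * q ^+ 2 = t ^+ 2 + eta%:P.
  rewrite -h {1}(divp_eq p q) (sqrrD_pchar2 poly2) exprMn mulrBl.
  rewrite !(oppr_pchar2 poly2) [_ + D * _]addrAC addrCA (addrr_pchar2 poly2).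
  by rewrite addr0 addrC.
apply/eqP; rewrite -subr_eq0.
have := size_sqr_addC_lt eta q_gt1 (ltn_modpN0 p q0).
rewrite -e; apply: contraTT => Ds0.
by rewrite -leqNgt (size_mul Ds0) ?expf_neq0 // (polySpred Ds0) addSn leq_addl.
Qed.

Lemma pell_sqr_or_polyC_den (D p q : {poly K}) (eta : K) :
  q != 0 -> p ^+ 2 - D * q ^+ 2 = eta%:P ->
  (exists E, D = E ^+ 2) \/
  (exists2 c, c != 0 & D = (c^-1 *: p) ^+ 2 + (eta / c ^+ 2)%:P).
Proof.
move=> q0 h; have [q_le1 | q_gt1] := leqP (size q) 1.
  have q_const := size1_polyC q_le1.
  have q00 : q`_0 != 0 by apply: contraNneq q0 => q00; rewrite q_const q00.
  rewrite q_const in h; right; exists q`_0 => //.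
  by rewrite (pell_polyC_den q00 h) -polyCN (oppr_pchar2 K2).
by left; exists (p %/ q); apply: pell_sqr_divp h.
Qed.

Lemma pell_sol_sqr (E : {poly K}) : (E + 1) ^+ 2 - E ^+ 2 * 1 ^+ 2 = 1%:P.
Proof. by rewrite (sqrrD_pchar2 poly2) expr1n mulr1 addrAC subrr add0r. Qed.

End Char2Pell.

Theorem mainTheorem18 (K : fieldType) (hK : 2%N \in [pchar K]) (D : {poly K}) :
  ((exists (p q : {poly K}) (eta : K),
       [/\ q != 0, eta != 0 & p ^+ 2 - D * q ^+ 2 = eta%:P])
   <-> (exists (E : {poly K}) (r : K), D = E ^+ 2 + r%:P))
  /\
  ((exists E : {poly K}, D = E ^+ 2)
   <-> (exists (p q : {poly K}) (eta : K),
       [/\ q != 0, eta != 0, p ^+ 2 - D * q ^+ 2 = eta%:P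
         & exists s : K, eta = s ^+ 2])).
Proof.
have hKX : 2%N \in [pchar {poly K}] by rewrite pchar_poly.
split; split.
- case=> p [q [eta [q0 _ h]]].
  case: (pell_sqr_or_polyC_den hK q0 h) => [[E ->] | [c _ ->]].
    by exists E, 0; rewrite addr0.
  by exists (c^-1 *: p), (eta / c ^+ 2).
- case=> E [r ->]; have [-> | r0] := eqVneq r 0.
    by exists (E + 1), 1, 1; rewrite addr0 pell_sol_sqr ?oner_neq0.
  exists E, 1, r; rewrite oner_neq0 expr1n mulr1 opprD addNKr.
  by rewrite -polyCN (oppr_pchar2 hK).
- case=> E ->; exists (E + 1), 1, 1.
  by rewrite pell_sol_sqr ?oner_neq0 //; split=> //; exists 1; rewrite expr1n.
- case=> p [q [eta [q0 _ h [s eta_s]]]].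
  case: (pell_sqr_or_polyC_den hK q0 h) => [// | [c _ ->]].
  exists (c^-1 *: p + (s / c)%:P).
  by rewrite (sqrrD_pchar2 hKX) -polyC_exp expr_div_n eta_s.
Qed.
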